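(* For every $\epsilon>0$ there is an instance with uniform weights on which, setting $$A=\mathrm{opt}_M\text{-}\mathrm{MAX}=\mathrm{opt}_M\text{-}\mathrm{SUM}=\mathrm{opt}_D\text{-}\mathrm{WMP}=\mathrm{opt}_D\text{-}\mathrm{EMP}=\mathrm{opt}_D\text{-}\mathrm{MWP}$$ and $$B=\mathrm{opt}_D\text{-}\mathrm{WEP}=\mathrm{opt}_D\text{-}\mathrm{EEP}=\mathrm{opt}_D\text{-}\mathrm{MEP}=\mathrm{opt}\text{-}\mathrm{MAX}=\mathrm{opt}\text{-}\mathrm{SUM}$$ (all the displayed equalities holding), we have $A\ge(2-\epsilon)B$.
   Context: An instance consists of a finite set $E$ of $n$ elements and $m$ tests, test $i$ being a subset $s_i\subseteq E$; uniform weights mean $p_e=1/n$ for SUM objectives (EMP, MEP, EEP) and $p_e=1$ for MAX objectives (WMP, MWP, WEP). A schedule is an infinite test sequence; deterministic schedules are fixed sequences; stochastic schedules choose $\sigma_t$ randomly depending on the past; memoryless schedules draw each $\sigma_t$ i.i.d. from a distribution on tests. Detection time $T(e,t)=\mathbb{E}[1+\min\{h\ge0:e\in s_{\sigma_{t+h}}\}]$, $M_t[e]=\sup_tT(e,t)$, $E_t[e]=\lim_H\frac1H\sum_{t\le H}T(e,t)$; valid schedules have $M_t[e]<\infty$ and $E_t[e]$ existing for all $e$, and convergent test frequencies. $\mathrm{EMP}=\sum_ep_eM_t[e]$, $\mathrm{MEP}=\sup_t\sum_ep_eT(e,t)$, $\mathrm{EEP}=\sum_ep_eE_t[e]$, $\mathrm{WMP}=\sup_{e,t}p_eT(e,t)$,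 $\mathrm{WEP}=\max_ep_eE_t[e]$, $\mathrm{MWP}=\lim_H\frac1H\sum_{t\le H}\max_ep_eT(e,t)$. $\mathrm{opt}_D\text{-}X$: infimum of $X$ over valid deterministic schedules; $\mathrm{opt}\text{-}\mathrm{SUM}$, $\mathrm{opt}\text{-}\mathrm{MAX}$: infima of EEP, WEP over valid stochastic schedules; $\mathrm{opt}_M\text{-}\mathrm{SUM}$, $\mathrm{opt}_M\text{-}\mathrm{MAX}$: infima of EEP, WEP over memoryless schedules. *)

From mathcomp Require Import all_boot all_order all_algebra.
From mathcomp Require Import all_classical all_reals all_analysis.
Set Implicit Arguments. Unset Strict Implicit. Unset Printing Implicit Defensive.
Import Order.TTheory GRing.Theory Num.Theory.
Import numFieldNormedType.Exports.
Local Open Scope ring_scope.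
Local Open Scope ereal_scope.

(* An instance: elements 'I_n, tests s : 'I_m -> {set 'I_n}.
   A (stochastic) schedule is a policy: given the past history
   (sigma_0, ..., sigma_{t-1}) it gives the distribution of sigma_t. *)
Section Schedules.
Variables (R : realType) (n m : nat) (s : 'I_m -> {set 'I_n}).

Definition policy := seq 'I_m -> {ffun 'I_m -> R}.

Definition is_dist (q : {ffun 'I_m -> R}) : Prop :=
  (forall i, (0 <= q i)%R) /\ (\sum_i q i)%R = 1%R.

Definition is_policy (pol : policy) : Prop := forall h, is_dist (pol h).

Definition det_pol (sigma : nat -> 'I_m) : policy :=
  fun h => [ffun i => ((i == sigma (size h))%:R)%R].

Definition mless_pol (q : {ffun 'I_m -> R}) : policy := fun _ => q.

Definition hprob (pol : policy) k (w : k.-tuple 'I_m) : R :=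
  (\prod_(j < k) pol (take j w) (tnth w j))%R.

Definition ptest (pol : policy) (i : 'I_m) (t : nat) : R :=
  (\sum_(w : (t.+1).-tuple 'I_m) hprob pol w * ((tnth w ord_max == i)%:R))%R.

Definition pmiss (pol : policy) (e : 'I_n) (t h : nat) : R :=
  (\sum_(w : (t + h).-tuple 'I_m) hprob pol w *
     ([forall j : 'I_(t + h), (t <= j)%N ==> (e \notin s (tnth w j))]%:R))%R.

(* T(e,t) = E[1 + min{h >= 0 : e in s_{sigma_{t+h}}}] = sum_{h>=0} P(min >= h) *)
Definition Tdet (pol : policy) (e : 'I_n) (t : nat) : \bar R :=
  \sum_(0 <= h <oo) (pmiss pol e t h)%:E.

Definition cesaro (f : nat -> \bar R) (H : nat) : \bar R :=
  ((H%:R)^-1)%:E * \sum_(t < H) f t.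

Definition Mt (pol : policy) (e : 'I_n) : \bar R := ereal_sup (range (Tdet pol e)).
Definition Et (pol : policy) (e : 'I_n) : \bar R := limn (cesaro (Tdet pol e)).

Definition freq (pol : policy) (i : 'I_m) (H : nat) : R :=
  ((H%:R)^-1 * \sum_(t < H) ptest pol i t)%R.

Definition valid (pol : policy) : Prop :=
  is_policy pol /\
  (forall e, Mt pol e < +oo) /\
  (forall e, cvgn (cesaro (Tdet pol e))) /\
  (forall i, cvgn (freq pol i)).

(* objectives, uniform weights: p_e = 1/n for SUM, p_e = 1 for MAX *)
Definition pw : \bar R := ((n%:R)^-1)%:E.
Definition EMP pol := \sum_(e < n) pw * Mt pol e.
Definition MEP pol := ereal_sup (range (fun t => \sum_(e < n) pw * Tdet pol e t)).
Definition EEP pol := \sum_(e < n) pw * Et pol e.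
Definition WMP pol := ereal_sup [set x | exists (e : 'I_n) (t : nat), x = Tdet pol e t].
Definition WEP pol := \big[maxe/-oo]_(e < n) Et pol e.
Definition maxT pol t := \big[maxe/-oo]_(e < n) Tdet pol e t.
Definition MWP pol := limn (cesaro (maxT pol)).

Definition det_valid : set (nat -> 'I_m) := [set sigma | valid (det_pol sigma)].
Definition optD (X : policy -> \bar R) :=
  ereal_inf ((fun sigma => X (det_pol sigma)) @` det_valid).
Definition optD_EMP := optD EMP.
Definition optD_MEP := optD MEP.
Definition optD_EEP := optD EEP.
Definition optD_WMP := optD WMP.
Definition optD_WEP := optD WEP.
(* MWP is a limit: only schedules for which this limit exists are admitted *)
Definition optD_MWP :=
  ereal_inf ((fun sigma => MWP (det_pol sigma)) @`
    [set sigma | det_valid sigma /\ cvgn (cesaro (maxT (det_pol sigma)))]).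
Definition opt_SUM := ereal_inf ((fun pol => EEP pol) @` [set pol | valid pol]).
Definition opt_MAX := ereal_inf ((fun pol => WEP pol) @` [set pol | valid pol]).
Definition optM_SUM := ereal_inf ((fun q => EEP (mless_pol q)) @` [set q | is_dist q]).
Definition optM_MAX := ereal_inf ((fun q => WEP (mless_pol q)) @` [set q | is_dist q]).

End Schedules.

From Pilot Require Import Defs.
From mathcomp Require Import all_boot all_order all_algebra.
From mathcomp Require Import all_classical all_reals all_analysis.
From mathcomp Require Import ring lra zify.
Import Order.TTheory GRing.Theory Num.Theory.
Import numFieldNormedType.Exports.
Local Open Scope ring_scope.
Set Implicit Arguments. Unset Strict Implicit. Unset Printing Implicit Defensive.

(* Take n elements and the n singleton tests.  Round robin detects each element
   after 1, 2, ..., n steps cyclically, so its average detection time is (n+1)/2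
   and its maximal one is n.  Conversely, h tests cover at most h elements, so for
   every schedule and every t the detection times satisfy sum_e T(e,t) >= n(n+1)/2.
   A memoryless schedule with probabilities q has E[e] = 1/q_e, and the tangent
   bound 1/q_e >= 2n - n^2 q_e averages to n.  A deterministic schedule with
   maximal waits M_e meets e in every window of length M_e, whence
   sum_e 1/M_e <= 1 and sum_e M_e >= n^2; and at every time one element is missed
   by the next n-1 tests, so the worst detection time is at least n.  Hence
   A = n and B = (n+1)/2, and 2n/(n+1) tends to 2. *)

Section Histories.
Variables (R : realType) (m : nat).
Implicit Types (pol : policy R m) (sig : nat -> 'I_m).

Lemma big_tuple0 (F : 0.-tuple 'I_m -> R) :
  \sum_(w : 0.-tuple 'I_m) F w = F [tuple].
Proof.
rewrite (eq_bigl (pred1 [tuple])) ?big_pred1_eq // => w /=.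
by rewrite [w]tuple0; apply/esym/eqP.
Qed.

Lemma tnth_rcons_widen k (w : k.-tuple 'I_m) x (j : 'I_k) :
  tnth [tuple of rcons w x] (widen_ord (leqnSn k) j) = tnth w j.
Proof. by rewrite !(tnth_nth x) /= nth_rcons size_tuple ltn_ord. Qed.

Lemma tnth_rcons_max k (w : k.-tuple 'I_m) x :
  tnth [tuple of rcons w x] ord_max = x.
Proof. by rewrite (tnth_nth x) /= nth_rcons size_tuple ltnn eqxx. Qed.

Lemma big_tupleS k (F : k.+1.-tuple 'I_m -> R) :
  \sum_(t : k.+1.-tuple 'I_m) F t =
  \sum_(w : k.-tuple 'I_m) \sum_(x : 'I_m) F [tuple of rcons w x].
Proof.
rewrite pair_big /=.
pose g (t : k.+1.-tuple 'I_m) :=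
  ([tuple tnth t (widen_ord (leqnSn k) j) | j < k], tnth t ord_max).
rewrite (reindex (fun p : k.-tuple 'I_m * 'I_m => [tuple of rcons p.1 p.2])) //.
exists g => [[w x]|t] _.
  congr (_, _); last exact: tnth_rcons_max.
  by apply: eq_from_tnth => j; rewrite tnth_mktuple tnth_rcons_widen.
apply: eq_from_tnth => j.
rewrite /g /= (tnth_nth (tnth t j)) /= nth_rcons size_tuple card_ord.
case: ltnP => [jk|kj].
  rewrite (nth_map (Ordinal jk)) ?size_enum_ord //.
  rewrite -[nat_of_ord j]/(nat_of_ord (Ordinal jk)) nth_ord_enum.
  by congr tnth; apply: val_inj.
have jk : nat_of_ord j = k by apply/eqP; rewrite eqn_leq kj -ltnS ltn_ord.
by rewrite jk eqxx; congr tnth; apply: val_inj.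
Qed.

Lemma hprob_rcons pol k (w : k.-tuple 'I_m) x :
  hprob pol [tuple of rcons w x] = hprob pol w * pol w x.
Proof.
rewrite /hprob big_ord_recr /= tnth_rcons_max; congr (_ * pol _ _).
  apply: eq_bigr => j _; rewrite tnth_rcons_widen; congr (pol _ _).
  by rewrite -cats1 takel_cat // size_tuple ltnW.
by rewrite -cats1 takel_cat ?size_tuple // take_oversize ?size_tuple.
Qed.

Lemma hprob_ge0 pol k (w : k.-tuple 'I_m) : is_policy pol -> 0 <= hprob pol w.
Proof. by move=> P; apply: prodr_ge0 => j _; case: (P (take j w)). Qed.

Lemma sum_hprob pol k : is_policy pol -> \sum_(w : k.-tuple 'I_m) hprob pol w = 1.
Proof.
move=> P; elim: k => [|k IH]; first by rewrite big_tuple0 /hprob big_ord0.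
rewrite big_tupleS -[RHS]IH; apply: eq_bigr => w _.
under eq_bigr do rewrite hprob_rcons.
by rewrite -mulr_sumr; case: (P w) => _ ->; rewrite mulr1.
Qed.

Lemma mless_expect_prod (q : {ffun 'I_m -> R}) k (g : nat -> 'I_m -> R) :
  \sum_(w : k.-tuple 'I_m) hprob (mless_pol q) w * \prod_(j < k) g j (tnth w j) =
  \prod_(j < k) \sum_(x : 'I_m) q x * g j x.
Proof.
elim: k => [|k IH]; first by rewrite big_tuple0 /hprob !big_ord0 mulr1.
rewrite big_tupleS big_ord_recr /= -IH mulr_suml; apply: eq_bigr => w _.
rewrite mulr_sumr; apply: eq_bigr => x _.
rewrite hprob_rcons big_ord_recr /= tnth_rcons_max.
under eq_bigr do rewrite tnth_rcons_widen.
by rewrite mulrACA.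
Qed.

Lemma hprob_det sig k (w : k.-tuple 'I_m) :
  hprob (det_pol R sig) w = (w == [tuple sig j | j < k])%:R.
Proof.
rewrite /hprob /det_pol.
under eq_bigr => j _ do rewrite ffunE size_take size_tuple ltn_ord.
case: eqP => [->|ne].
  by rewrite big1 // => j _; rewrite tnth_mktuple eqxx.
have [j Hj] : exists j : 'I_k, tnth w j != sig j.
  apply/existsP; apply: contra_notT ne => /existsPn H.
  apply: eq_from_tnth => j; rewrite tnth_mktuple; apply/eqP.
  by move: (H j); rewrite negbK.
by rewrite (bigD1 j) //= (negbTE Hj) mul0r.
Qed.

Lemma det_expect sig k (F : k.-tuple 'I_m -> R) :
  \sum_(w : k.-tuple 'I_m) hprob (det_pol R sig) w * F w = F [tuple sig j | j < k].
Proof.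
rewrite (bigD1 [tuple sig j | j < k]) //= hprob_det eqxx mul1r big1 ?addr0 //.
by move=> w /negbTE Hw; rewrite hprob_det Hw mul0r.
Qed.

Lemma is_policy_det sig : is_policy (det_pol R sig).
Proof.
move=> h; split => [i|]; first by rewrite ffunE ler0n.
rewrite (bigD1 (sig (size h))) //= ffunE eqxx big1 ?addr0 // => i Hi.
by rewrite ffunE (negbTE Hi).
Qed.

Lemma ptest_det sig i t : ptest (det_pol R sig) i t = (sig t == i)%:R.
Proof. by rewrite /ptest det_expect tnth_mktuple. Qed.

End Histories.

Section Detection.
Variables (R : realType) (n m : nat) (s : 'I_m -> {set 'I_n}).
Implicit Types (pol : policy R m) (sig : nat -> 'I_m).

Lemma pmiss_ge0 pol e t h : is_policy pol -> 0 <= pmiss s pol e t h.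
Proof. by move=> P; apply: sumr_ge0 => w _; rewrite mulr_ge0 ?hprob_ge0. Qed.

Lemma pmiss_det sig e t h :
  pmiss s (det_pol R sig) e t h = [forall j : 'I_h, e \notin s (sig (t + j)%N)]%:R.
Proof.
rewrite /pmiss det_expect; congr ((nat_of_bool _)%:R).
apply/forallP/forallP => H j.
  by move: (H (rshift t j)); rewrite /= tnth_mktuple leq_addr.
apply/implyP => tj; rewrite tnth_mktuple.
have jh : (j - t < h)%N by rewrite ltn_subLR // ltn_ord.
by move: (H (Ordinal jh)); rewrite /= subnKC.
Qed.

Local Open Scope ereal_scope.

Lemma Tdet_ge0 pol e t : is_policy pol -> 0 <= Tdet s pol e t.
Proof. by move=> P; apply: nneseries_ge0 => h _ _; rewrite lee_fin pmiss_ge0. Qed.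

Lemma Mt_ge0 pol e : is_policy pol -> 0 <= Mt s pol e.
Proof.
by move=> P; apply: le_trans (Tdet_ge0 e 0 P) _; apply: ereal_sup_ubound; exists 0%N.
Qed.

Lemma Tdet_ge_partial pol e t k : is_policy pol ->
  \sum_(h < k) (pmiss s pol e t h)%:E <= Tdet s pol e t.
Proof.
move=> P; rewrite -(big_mkord xpredT (fun h => (pmiss s pol e t h)%:E)).
by apply: nneseries_lim_ge => h _ _; rewrite lee_fin pmiss_ge0.
Qed.

Lemma Tdet_det_ge sig e t h :
  [forall j : 'I_h, e \notin s (sig (t + j)%N)] -> h.+1%:R%:E <= Tdet s (det_pol R sig) e t.
Proof.
move=> miss; apply: le_trans (Tdet_ge_partial _ _ h.+1 (is_policy_det _ _)).
have missk (k : 'I_h.+1) : [forall j : 'I_k, e \notin s (sig (t + j)%N)].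
  by apply/forallP => j; exact: (forallP miss (widen_ord (ltnSE (ltn_ord k)) j)).
rewrite sumEFin lee_fin; under eq_bigr => k _ do rewrite pmiss_det missk.
by rewrite sumr_const card_ord.
Qed.

End Detection.

Section CesaroPeriodic.
Variables (R : realType) (p : nat) (f : nat -> R).
Hypotheses (p_gt0 : (0 < p)%N) (f_periodic : forall t, f (t + p)%N = f t).

Let c := p%:R^-1 * \sum_(t < p) f t.

Lemma periodic_shift q t : f (q * p + t)%N = f t.
Proof. by elim: q => // q IH; rewrite mulSnr addnAC f_periodic. Qed.

Lemma sum_periodic_centered H :
  \sum_(t < H) (f t - c) = \sum_(t < H %% p) (f t - c).
Proof.
have period0 : \sum_(t < p) (f t - c) = 0.
  rewrite sumrB sumr_const card_ord /c -mulr_natr; field.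
  by rewrite pnatr_eq0 -lt0n.
have shift q r : \sum_(t < r) (f (q * p + t)%N - c) = \sum_(t < r) (f t - c).
  by apply: eq_bigr => t _; rewrite periodic_shift.
rewrite -!(big_mkord xpredT (fun t => f t - c)) {1}(divn_eq H p) big_mkord.
rewrite big_split_ord /= shift big_mkord.
suff -> : \sum_(t < H %/ p * p) (f t - c) = 0 by rewrite add0r.
elim: (H %/ p)%N => [|q IH]; first by rewrite big_ord0.
by rewrite mulSnr big_split_ord /= IH shift period0 addr0.
Qed.

(* The centered partial sums are bounded, hence the averages converge to [c]. *)
Lemma cvg_cesaro_periodic :
  ((fun H : nat => H%:R^-1 * \sum_(t < H) f t : R) @ \oo --> (c : R))%classic.
Proof.
pose M := \sum_(t < p) `|f t - c|.
have bounded H : `|\sum_(t < H) (f t - c)| <= M.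
  rewrite sum_periodic_centered; apply: le_trans (ler_norm_sum _ _ _) _.
  have rp : (H %% p <= p)%N by rewrite ltnW // ltn_pmod.
  rewrite /M (big_ord_widen p (fun i => `|f i - c|) rp) big_mkcond /=.
  by apply: ler_sum => i _; case: ifP.
apply/cvgrPdist_le => e e0.
exists (Num.truncn (M / e)).+1 => // H /= MeH.
have H0 : (0 < H%:R :> R) by rewrite ltr0n (leq_trans _ MeH).
have -> : c - H%:R^-1 * \sum_(t < H) f t = - (H%:R^-1 * \sum_(t < H) (f t - c)).
  by rewrite sumrB sumr_const card_ord -mulr_natr; field; rewrite gt_eqF.
rewrite normrN normrM normfV normr_nat ler_pdivrMl //.
apply: le_trans (bounded H) _; rewrite -ler_pdivrMr //.
apply: ltW; apply: lt_le_trans (real_truncnS_gt (num_real (M / e))) _.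
by rewrite ler_nat.
Qed.

Lemma cesaro_EFin H :
  Defs.cesaro (fun t => (f t)%:E) H = (H%:R^-1 * \sum_(t < H) f t)%:E.
Proof. by rewrite /Defs.cesaro sumEFin EFinM. Qed.

Lemma cesaro_periodic :
  cvgn (Defs.cesaro (fun t => (f t)%:E)) /\ limn (Defs.cesaro (fun t => (f t)%:E)) = c%:E.
Proof.
have cv : (Defs.cesaro (fun t => (f t)%:E) @ \oo --> c%:E)%classic.
  rewrite (funext cesaro_EFin); apply: cvg_EFin; first by exists 0%N.
  exact: cvg_cesaro_periodic.
by split; [apply/cvg_ex; exists c%:E|exact: cvg_lim].
Qed.

End CesaroPeriodic.

Section CesaroBounds.
Variable R : realType.
Local Open Scope ereal_scope.

Lemma cesaro_const (c : \bar R) : 0 <= c -> (Defs.cesaro (fun=> c) @ \oo --> c)%classic.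
Proof.
move=> c0; apply: cvg_near_cst; exists 1%N => // -[|H] //= _.
case: c c0 => [r| |] // _.
  by rewrite /Defs.cesaro sumEFin sumr_const card_ord -EFinM -[(r *+ _)%R]mulr_natl mulKf.
rewrite /Defs.cesaro big_ord_recr /= addey ?gt0_muley ?lte_fin ?invr_gt0 ?ltr0n //.
by rewrite gt_eqF // (@lt_le_trans _ _ 0) ?ltNy0 // sume_ge0.
Qed.

Lemma cesaro_ge (c : R) (f : nat -> \bar R) H : (0 < H)%N ->
  (forall t, c%:E <= f t) -> c%:E <= Defs.cesaro f H.
Proof.
move=> H0 cf; apply: (@le_trans _ _ ((H%:R^-1)%:E * \sum_(t < H) c%:E)).
  rewrite sumEFin sumr_const card_ord -EFinM -[(c *+ _)%R]mulr_natl mulKf //.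
  by rewrite pnatr_eq0 -lt0n.
by apply: lee_wpmul2l; [rewrite lee_fin invr_ge0 ler0n|exact: lee_sum].
Qed.

Lemma lim_cesaro_ge (c : R) (f : nat -> \bar R) : cvgn (Defs.cesaro f) ->
  (forall t, c%:E <= f t) -> c%:E <= limn (Defs.cesaro f).
Proof. by move=> cv cf; apply: cvge_ge cv; exists 1%N => // H /= /cesaro_ge; apply. Qed.

End CesaroBounds.

Section Auxiliary.
Variable R : realType.
Local Open Scope ereal_scope.

Lemma bigmaxe_const k (c : \bar R) : \big[maxe/-oo]_(e < k.+1) c = c.
Proof.
apply/le_anti/andP; split; last exact: (le_bigmax _ (fun=> c) ord0).
by apply: bigmax_le => //; exact: leNye.
Qed.

Lemma sum_pw_EFin n (x : 'I_n -> R) :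
  \sum_(e < n) pw R n * (x e)%:E = (n%:R^-1 * \sum_(e < n) x e)%:E.
Proof. by under eq_bigr do rewrite -EFinM; rewrite sumEFin mulr_sumr. Qed.

Lemma sum_pw_const n (c : R) : (0 < n)%N -> \sum_(e < n) pw R n * c%:E = c%:E.
Proof.
move=> n0; rewrite sum_pw_EFin sumr_const card_ord -[(c *+ _)%R]mulr_natl mulKf //.
by rewrite pnatr_eq0 -lt0n.
Qed.

Lemma sum_pw_le_bigmax n (x : 'I_n -> \bar R) : (0 < n)%N -> (forall e, 0 <= x e) ->
  \sum_(e < n) pw R n * x e <= \big[maxe/-oo]_(e < n) x e.
Proof.
move=> n0 x0; set M := \big[maxe/-oo]_(e < n) x e.
have xM e : x e <= M by exact: le_bigmax.
case EM : M => [r| |]; last 2 first.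
- exact: leey.
- by have := xM (Ordinal n0); rewrite EM; move/(le_trans (x0 _)).
rewrite -(sum_pw_const r n0); apply: lee_sum => e _.
by apply: lee_wpmul2l; [rewrite lee_fin invr_ge0 ler0n|rewrite -EM].
Qed.

Lemma ereal_inf_attained (X : Type) (S : set X) (f : X -> \bar R) x0 :
  S x0 -> (forall x, S x -> f x0 <= f x) -> ereal_inf (f @` S) = f x0.
Proof.
move=> Sx0 fmin; apply/le_anti/andP; split; first by apply: ereal_inf_lbound; exists x0.
by apply: le_ereal_inf_tmp => _ [x Sx <-]; exact: fmin.
Qed.

Lemma eseries_geometric (a : R) : (0 < a)%R -> (a <= 1)%R ->
  \sum_(0 <= h <oo) ((1 - a) ^+ h)%:E = (a^-1)%:E.
Proof.
move=> a0 a1; apply: cvg_lim => //.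
rewrite (_ : (fun k => _) = fun k => (series (geometric 1 (1 - a)) k)%:E); last first.
  apply/funext => k; rewrite sumEFin /series /=; congr (_%:E).
  by apply: eq_bigr => h _; rewrite mul1r.
apply: cvg_EFin; first by exists 0%N.
have := @cvg_geometric_series R 1 (1 - a); rewrite subKr mul1r; apply.
by rewrite ger0_norm ?subr_ge0 // ltrBlDr ltrDl.
Qed.

End Auxiliary.

(* The tangent line of [y |-> y^-1] at [y = c^-1] lies below its graph. *)
Lemma tangent_le_inv (R : realFieldType) (c y : R) : 0 < y -> 2 * c - c ^+ 2 * y <= y^-1.
Proof.
move=> y0; rewrite -subr_ge0.
have -> : y^-1 - (2 * c - c ^+ 2 * y) = (c * y - 1) ^+ 2 / y by field; rewrite gt_eqF.
by rewrite divr_ge0 ?sqr_ge0 // ltW.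
Qed.

Lemma sum_succ_nat (R : realFieldType) k :
  \sum_(i < k) i.+1%:R = k%:R * k.+1%:R / 2 :> R.
Proof.
elim: k => [|k IH]; first by rewrite big_ord0 !mul0r.
by rewrite big_ord_recr /= IH -!natr1; field.
Qed.

Definition singletons {K : nat} (i : 'I_K.+1) : {set 'I_K.+1} := [set i].

Section SingletonTests.
Variables (R : realType) (K : nat).
Local Notation N := K.+1.

(* Within [h] steps at most [h] elements get tested, whatever the schedule. *)
Lemma sum_missed_ge t h (w : (t + h).-tuple 'I_N) :
  (N - h)%:R <= \sum_(e : 'I_N)
     [forall j : 'I_(t + h), (t <= j)%N ==> (e \notin singletons (tnth w j))]%:R :> R.
Proof.
pose tested := [set tnth w (rshift t j) | j : 'I_h].
have -> : \sum_(e : 'I_N)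
     [forall j : 'I_(t + h), (t <= j)%N ==> (e \notin singletons (tnth w j))]%:R
   = \sum_(e : 'I_N) (e \in ~: tested)%:R :> R.
  apply: eq_bigr => e _; congr ((nat_of_bool _)%:R).
  rewrite finset.in_setC; apply/forallP/idP => [miss|untested j].
    apply/imsetP => -[j _ ej]; move: (miss (rshift t j)).
    by rewrite /= leq_addr finset.in_set1 ej eqxx.
  apply/implyP => tj; rewrite finset.in_set1; apply: contra untested => /eqP ->.
  have jh : (j - t < h)%N by rewrite ltn_subLR // ltn_ord.
  apply/imsetP; exists (Ordinal jh) => //; congr tnth; apply: val_inj => /=.
  by rewrite subnKC.
rewrite -natr_sum ler_nat -[X in (_ <= X)%N]/(\sum_(e : 'I_N) (e \in ~: tested : nat))%N.
rewrite -big_mkcond /= sum1_card.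
have card_tested : (#|tested| <= h)%N.
  by rewrite (leq_trans (leq_imset_card _ _)) // card_ord.
have := cardsC tested; rewrite card_ord; lia.
Qed.

Lemma sum_pmiss_ge (pol : policy R N) t h : is_policy pol ->
  (N - h)%:R <= \sum_(e : 'I_N) pmiss singletons pol e t h.
Proof.
move=> P; rewrite /pmiss exchange_big /=.
apply: (@le_trans _ _ (\sum_(w : (t + h).-tuple 'I_N) hprob pol w * (N - h)%:R)).
  by rewrite -mulr_suml sum_hprob // mul1r.
apply: ler_sum => w _; rewrite -mulr_sumr.
by apply: ler_wpM2l; [exact: hprob_ge0|exact: sum_missed_ge].
Qed.

Lemma sum_Tdet_ge (pol : policy R N) t : is_policy pol ->
  ((N%:R * N.+1%:R / 2)%:E <= \sum_(e < N) Tdet singletons pol e t)%E.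
Proof.
move=> P.
apply: (@le_trans _ _ (\sum_(e < N) \sum_(h < N) (pmiss singletons pol e t h)%:E)%E);
  last by apply: lee_sum => e _; exact: Tdet_ge_partial.
rewrite exchange_big /=; under [X in (_ <= X)%E]eq_bigr do rewrite sumEFin.
rewrite sumEFin lee_fin -sum_succ_nat (reindex_inj rev_ord_inj) /=.
apply: ler_sum => h _; apply: le_trans (sum_pmiss_ge t h P).
by rewrite subnSK.
Qed.

Local Notation B := (N.+1%:R / 2 : R).
Local Open Scope ereal_scope.

Lemma sum_pw_Tdet_ge (pol : policy R N) t : is_policy pol ->
  B%:E <= \sum_(e < N) pw R N * Tdet singletons pol e t.
Proof.
move=> P; rewrite -ge0_sume_distrr; last by move=> e _; exact: Tdet_ge0.
apply: le_trans (lee_wpmul2l _ (sum_Tdet_ge t P)); last by rewrite lee_fin invr_ge0 ler0n.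
by rewrite -EFinM lee_fin -!mulrA mulKf.
Qed.

Lemma MEP_ge (pol : policy R N) : is_policy pol -> B%:E <= MEP singletons pol.
Proof.
by move=> P; apply: le_trans (sum_pw_Tdet_ge 0 P) _; apply: ereal_sup_ubound; exists 0%N.
Qed.

Lemma cesaro_sum_pw (pol : policy R N) H : is_policy pol ->
  Defs.cesaro (fun t => \sum_(e < N) pw R N * Tdet singletons pol e t) H =
  \sum_(e < N) pw R N * Defs.cesaro (Tdet singletons pol e) H.
Proof.
move=> P; have pw0 : 0 <= pw R N by rewrite lee_fin invr_ge0 ler0n.
rewrite /Defs.cesaro exchange_big ge0_sume_distrr /=; last first.
  by move=> e _; apply: sume_ge0 => t _; rewrite mule_ge0 ?Tdet_ge0.
apply: eq_bigr => e _; rewrite -ge0_sume_distrr; last by move=> t _; exact: Tdet_ge0.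
by rewrite muleCA.
Qed.

Lemma EEP_ge (pol : policy R N) : valid singletons pol -> B%:E <= EEP singletons pol.
Proof.
move=> [P [_ [cvE _]]].
have cv : (Defs.cesaro (fun t => \sum_(e < N) pw R N * Tdet singletons pol e t) @ \oo
             --> EEP singletons pol)%classic.
  rewrite (funext (fun H => cesaro_sum_pw H P)); apply: cvg_nnesum => e _.
    near=> H; apply: mule_ge0; first by rewrite lee_fin invr_ge0 ler0n.
    apply: mule_ge0; first by rewrite lee_fin invr_ge0 ler0n.
    by apply: sume_ge0 => t _; exact: Tdet_ge0.
  by apply: cvgeZl => //; exact: cvE.
rewrite -(cvg_lim _ cv) //; apply: lim_cesaro_ge; last by move=> t; exact: sum_pw_Tdet_ge.
by apply/cvg_ex; eexists; exact: cv.
Unshelve. all: end_near.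
Qed.

Lemma Et_ge0 (pol : policy R N) e : valid singletons pol -> 0 <= Et singletons pol e.
Proof.
by move=> [P [_ [cvE _]]]; apply: lim_cesaro_ge (cvE e) _ => t; exact: Tdet_ge0.
Qed.

Lemma WEP_ge (pol : policy R N) : valid singletons pol -> B%:E <= WEP singletons pol.
Proof.
move=> V; apply: le_trans (EEP_ge V) _.
by apply: sum_pw_le_bigmax => // e; exact: Et_ge0.
Qed.

End SingletonTests.

Section RoundRobin.
Variables (R : realType) (K : nat).
Local Notation N := K.+1.
Implicit Type e : 'I_N.

Definition round_robin (t : nat) : 'I_N := Ordinal (ltn_pmod t (ltn0Sn K)).

(* the number of steps after [t] before round robin tests [e] *)
Definition rr_wait (e : 'I_N) (t : nat) : nat := ((e + N - t %% N) %% N)%N.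

Lemma rr_wait_lt e t : (rr_wait e t < N)%N.
Proof. exact: ltn_pmod. Qed.

Lemma rr_waitP e t : ((t + rr_wait e t) %% N = e)%N.
Proof.
rewrite /rr_wait modnDmr {1}(divn_eq t N) -addnA subnKC; last first.
  by apply: leq_trans (ltnW (ltn_pmod t (ltn0Sn K))) _; rewrite leq_addl.
by rewrite modnMDl modnDr modn_small.
Qed.

Lemma rr_wait_unique e t i : (i < N)%N -> ((t + i) %% N = e)%N -> i = rr_wait e t.
Proof.
move=> iN tie; have : (t + i == t + rr_wait e t %[mod N])%N by rewrite tie rr_waitP.
by rewrite eqn_modDl !modn_small ?rr_wait_lt // => /eqP.
Qed.

Lemma rr_wait_periodic e t : rr_wait e (t + N) = rr_wait e t.
Proof. by rewrite /rr_wait modnDr. Qed.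

Lemma round_robin_periodic t : round_robin (t + N) = round_robin t.
Proof. by apply: val_inj; rewrite /= modnDr. Qed.

Lemma rr_wait_max t : rr_wait (round_robin (t + K)) t = K.
Proof. by apply/esym/rr_wait_unique. Qed.

Lemma rr_missed e t h :
  [forall j : 'I_h, e \notin singletons (round_robin (t + j))] = (h <= rr_wait e t)%N.
Proof.
apply/forallP/idP => [miss|hw j].
  rewrite leqNgt; apply/negP => wh; move: (miss (Ordinal wh)).
  rewrite finset.in_set1 /=; apply/negP; rewrite negbK.
  by apply/eqP/val_inj; rewrite /= rr_waitP.
rewrite finset.in_set1; apply/negP => /eqP je.
have jw : nat_of_ord j = rr_wait e t.
  apply: rr_wait_unique; last by rewrite je.
  by apply: leq_trans (ltn_ord j) (leq_trans hw (ltnW (rr_wait_lt e t))).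
by move: (ltn_ord j); rewrite jw ltnNge hw.
Qed.

Lemma Tdet_rr e t : Tdet singletons (det_pol R round_robin) e t = (rr_wait e t).+1%:R%:E.
Proof.
rewrite /Tdet; under eq_eseriesr do rewrite pmiss_det rr_missed.
rewrite (nneseries_split 0 (rr_wait e t).+1); last by move=> k _; rewrite lee_fin ler0n.
rewrite eseries0 ?adde0; last by move=> i; rewrite add0n => wi _; rewrite leqNgt wi.
rewrite add0n big_mkord sumEFin; congr (_%:E).
under eq_bigr => i _ do rewrite -ltnS ltn_ord.
by rewrite sumr_const card_ord.
Qed.

Lemma sum_rr_wait_over_elements t :
  \sum_(e < N) (rr_wait e t).+1%:R = N%:R * N.+1%:R / 2 :> R.
Proof.
rewrite -sum_succ_nat.
have inj : injective (fun e : 'I_N => Ordinal (rr_wait_lt e t)).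
  move=> e1 e2 /(congr1 val) /= E.
  by apply: val_inj; rewrite /= -(rr_waitP e1 t) E rr_waitP.
by rewrite [RHS](reindex_inj inj).
Qed.

Lemma sum_rr_wait_over_period e :
  \sum_(t < N) (rr_wait e t).+1%:R = N%:R * N.+1%:R / 2 :> R.
Proof.
rewrite -sum_succ_nat.
have inj : injective (fun t : 'I_N => Ordinal (rr_wait_lt e t)).
  move=> t1 t2 /(congr1 val) /= E.
  have := rr_waitP e t1; rewrite E -(rr_waitP e t2) => /eqP.
  by rewrite eqn_modDr !modn_small // => /eqP; exact: val_inj.
by rewrite [RHS](reindex_inj inj).
Qed.

Lemma rr_wait_succ e : rr_wait e e.+1 = K.
Proof. by apply/esym/rr_wait_unique => //; rewrite addSnnS modnDr modn_small. Qed.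

Local Notation rr := (det_pol R round_robin).

Lemma cesaro_Tdet_rr e :
  cvgn (Defs.cesaro (Tdet singletons rr e)) /\ Et singletons rr e = (N.+1%:R / 2)%:E.
Proof.
have per t : (rr_wait e (t + N)).+1%:R = (rr_wait e t).+1%:R :> R.
  by rewrite rr_wait_periodic.
have [cv lim] := cesaro_periodic (ltn0Sn K) per.
rewrite /Et (funext (Tdet_rr e)); split => //.
by rewrite lim sum_rr_wait_over_period; congr (_%:E); field.
Qed.

Local Open Scope ereal_scope.

Lemma Tdet_rr_le e t : Tdet singletons rr e t <= N%:R%:E.
Proof. by rewrite Tdet_rr lee_fin ler_nat ltnS -ltnS rr_wait_lt. Qed.

Lemma Mt_rr e : Mt singletons rr e = N%:R%:E.
Proof.
apply/le_anti/andP; split; first by apply: ge_ereal_sup => _ [t _ <-]; exact: Tdet_rr_le.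
by apply: ereal_sup_ubound; exists e.+1 => //; rewrite Tdet_rr rr_wait_succ.
Qed.

Lemma Et_rr e : Et singletons rr e = (N.+1%:R / 2)%:E.
Proof. exact: (cesaro_Tdet_rr e).2. Qed.

Lemma valid_rr : valid singletons rr.
Proof.
split; first exact: is_policy_det.
split; first by move=> e; rewrite Mt_rr ltry.
split; first by move=> e; case: (cesaro_Tdet_rr e).
move=> i; rewrite /freq; under eq_fun do under eq_bigr do rewrite ptest_det.
apply/cvg_ex; eexists.
apply: (@cvg_cesaro_periodic R N (fun t => (round_robin t == i)%:R)) => // t.
by rewrite round_robin_periodic.
Qed.

Lemma EEP_rr : EEP singletons rr = (N.+1%:R / 2)%:E.
Proof. by rewrite /EEP; under eq_bigr do rewrite Et_rr; rewrite sum_pw_const. Qed.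

Lemma WEP_rr : WEP singletons rr = (N.+1%:R / 2)%:E.
Proof. by rewrite /WEP; under eq_bigr do rewrite Et_rr; rewrite bigmaxe_const. Qed.

Lemma MEP_rr : MEP singletons rr = (N.+1%:R / 2)%:E.
Proof.
have sum_t t : \sum_(e < N) pw R N * Tdet singletons rr e t = (N.+1%:R / 2)%:E.
  under eq_bigr do rewrite Tdet_rr.
  by rewrite sum_pw_EFin sum_rr_wait_over_elements; congr (_%:E); field.
apply/le_anti/andP; split; first by apply: ge_ereal_sup => _ [t _ <-]; rewrite sum_t.
by apply: ereal_sup_ubound; exists 0%N => //; rewrite sum_t.
Qed.

Lemma WMP_rr : WMP singletons rr = N%:R%:E.
Proof.
apply/le_anti/andP; split; first by apply: ge_ereal_sup => _ [e [t ->]]; exact: Tdet_rr_le.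
by apply: ereal_sup_ubound; exists ord0, 1%N; rewrite Tdet_rr (rr_wait_succ ord0).
Qed.

Lemma EMP_rr : EMP singletons rr = N%:R%:E.
Proof. by rewrite /EMP; under eq_bigr do rewrite Mt_rr; rewrite sum_pw_const. Qed.

Lemma maxT_rr t : maxT singletons rr t = N%:R%:E.
Proof.
apply/le_anti/andP; split.
  by apply: bigmax_le => [|e _]; [exact: leNye|exact: Tdet_rr_le].
apply: le_trans (le_bigmax _ _ (round_robin (t + K))).
by rewrite Tdet_rr rr_wait_max.
Qed.

Lemma cesaro_maxT_rr : (Defs.cesaro (maxT singletons rr) @ \oo --> N%:R%:E)%classic.
Proof. by rewrite (funext maxT_rr); apply: cesaro_const; rewrite lee_fin. Qed.

Lemma MWP_rr : MWP singletons rr = N%:R%:E.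
Proof. exact: cvg_lim cesaro_maxT_rr. Qed.

End RoundRobin.

Section Memoryless.
Variables (R : realType) (K : nat).
Local Notation N := K.+1.
Implicit Type q : {ffun 'I_N -> R}.

Lemma dist_le1 q e : is_dist q -> q e <= 1.
Proof. by case=> q0 <-; rewrite (bigD1 e) //= lerDl sumr_ge0. Qed.

Lemma prod_nat_of_bool k (b : 'I_k -> bool) :
  \prod_(j < k) (b j)%:R = [forall j, b j]%:R :> R.
Proof.
case: (boolP [forall j, b j]) => [/forallP bT|/forallPn [j bj]].
  by rewrite big1 // => j _; rewrite bT.
by rewrite (bigD1 j) //= (negbTE bj) mul0r.
Qed.

Lemma pmiss_mless q e t h : is_dist q ->
  pmiss singletons (mless_pol q) e t h = (1 - q e) ^+ h.
Proof.
move=> [q0 q1].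
pose g j (x : 'I_N) := ((t <= j)%N ==> (e \notin singletons x))%:R : R.
have -> : pmiss singletons (mless_pol q) e t h =
    \sum_(w : (t + h).-tuple 'I_N) hprob (mless_pol q) w * \prod_(j < t + h) g j (tnth w j).
  by apply: eq_bigr => w _; rewrite prod_nat_of_bool.
have step j : \sum_(x : 'I_N) q x * g j x = if (t <= j)%N then 1 - q e else 1.
  rewrite /g; case: (t <= j)%N => /=; last by under eq_bigr do rewrite mulr1.
  rewrite -[in RHS]q1 (bigD1 e) //= [in RHS](bigD1 e) //= finset.in_set1 eqxx mulr0.
  rewrite add0r addrAC subrr add0r; apply: eq_bigr => x xe.
  by rewrite finset.in_set1 eq_sym (negbTE xe) mulr1.
rewrite mless_expect_prod; under eq_bigr do rewrite step.
rewrite big_split_ord /= big1 ?mul1r; last by move=> j _; rewrite leqNgt ltn_ord.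
by under eq_bigr do rewrite leq_addr; rewrite prodr_const card_ord.
Qed.

Local Open Scope ereal_scope.

Lemma Tdet_mless q e t : is_dist q ->
  Tdet singletons (mless_pol q) e t = \sum_(0 <= h <oo) ((1 - q e) ^+ h)%:E.
Proof. by move=> D; rewrite /Tdet; under eq_eseriesr do rewrite pmiss_mless //. Qed.

Lemma Et_mless q e : is_dist q ->
  Et singletons (mless_pol q) e = \sum_(0 <= h <oo) ((1 - q e) ^+ h)%:E.
Proof.
move=> D; rewrite /Et (funext (Tdet_mless e ^~ D)); apply: cvg_lim => //.
apply: cesaro_const; apply: nneseries_ge0 => h _ _.
by rewrite lee_fin exprn_ge0 // subr_ge0 dist_le1.
Qed.

Lemma Et_mless_ge q e : is_dist q ->
  (2 * N%:R - N%:R ^+ 2 * q e)%:E <= Et singletons (mless_pol q) e.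
Proof.
move=> D; rewrite Et_mless //.
have [q0|qe0] := ltrP 0 (q e).
  by rewrite eseries_geometric ?dist_le1 // lee_fin tangent_le_inv.
have -> : q e = 0%R by apply/le_anti; rewrite qe0 (D.1 e).
rewrite mulr0 !subr0.
have partial := @nneseries_lim_ge R (fun h => (1 ^+ h)%:E) xpredT 0 (2 * N)%N.
apply: le_trans (partial _); last by move=> k _ _; rewrite lee_fin expr1n.
rewrite sumEFin lee_fin big_mkord; under eq_bigr do rewrite expr1n.
by rewrite sumr_const card_ord natrM.
Qed.

(* Averaging the tangent bound kills the dependence on [q] since [q] sums to 1. *)
Lemma EEP_mless_ge q : is_dist q -> N%:R%:E <= EEP singletons (mless_pol q).
Proof.
move=> D; apply: (@le_trans _ _ (\sum_(e < N) pw R N * (2 * N%:R - N%:R ^+ 2 * q e)%:E)).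
  rewrite sum_pw_EFin lee_fin sumrB -!mulr_sumr D.2 mulr1 !sumr_const card_ord.
  rewrite -[(N%:R *+ N)%R]mulr_natr.
  suff -> : (N%:R^-1 * (2 * (N%:R * N%:R) - N%:R ^+ 2) = N%:R :> R)%R by [].
  by field.
apply: lee_sum => e _; apply: lee_wpmul2l; first by rewrite lee_fin invr_ge0 ler0n.
exact: Et_mless_ge.
Qed.

Lemma WEP_mless_ge q : is_dist q -> N%:R%:E <= WEP singletons (mless_pol q).
Proof.
move=> D; apply: le_trans (EEP_mless_ge D) _; apply: sum_pw_le_bigmax => // e.
rewrite Et_mless //; apply: nneseries_ge0 => h _ _.
by rewrite lee_fin exprn_ge0 // subr_ge0 dist_le1.
Qed.

Definition uniform_dist : {ffun 'I_N -> R} := [ffun=> (N%:R^-1)%R].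

Lemma is_dist_uniform : is_dist uniform_dist.
Proof.
split=> [i|]; first by rewrite ffunE invr_ge0 ler0n.
under eq_bigr do rewrite ffunE.
by rewrite sumr_const card_ord -[(_ *+ N)%R]mulr_natr mulVf // pnatr_eq0.
Qed.

Lemma Et_uniform e : Et singletons (mless_pol uniform_dist) e = N%:R%:E.
Proof.
rewrite Et_mless; last exact: is_dist_uniform.
rewrite ffunE eseries_geometric ?invrK //.
by rewrite invf_le1 ?ltr0n // ler1n.
Qed.

Lemma EEP_uniform : EEP singletons (mless_pol uniform_dist) = N%:R%:E.
Proof. by rewrite /EEP; under eq_bigr do rewrite Et_uniform; rewrite sum_pw_const. Qed.

Lemma WEP_uniform : WEP singletons (mless_pol uniform_dist) = N%:R%:E.
Proof. by rewrite /WEP; under eq_bigr do rewrite Et_uniform; rewrite bigmaxe_const. Qed.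

End Memoryless.

Lemma sum_inv_le1_sum_ge (R : realFieldType) n (x : 'I_n -> R) :
  (forall i, 0 < x i) -> \sum_(i < n) (x i)^-1 <= 1 -> n%:R ^+ 2 <= \sum_(i < n) x i.
Proof.
move=> x0 inv_le1.
have tangent i : 2 * n%:R - n%:R ^+ 2 * (x i)^-1 <= x i.
  by rewrite -[X in _ <= X]invrK tangent_le_inv ?invr_gt0.
apply: le_trans (ler_sum _ (fun i _ => tangent i)).
rewrite sumrB -!mulr_sumr sumr_const card_ord -[(n%:R *+ n)%R]mulr_natr.
have : n%:R ^+ 2 * \sum_(i < n) (x i)^-1 <= n%:R ^+ 2 by rewrite ler_piMr ?exprn_ge0.
by rewrite !expr2; nra.
Qed.

Section Deterministic.
Variables (R : realType) (K : nat) (sig : nat -> 'I_K.+1).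
Local Notation N := K.+1.
Local Notation pol := (det_pol R sig).

Lemma exists_missed t : exists e, [forall j : 'I_K, e \notin singletons (sig (t + j)%N)].
Proof.
pose tested := [set sig (t + j)%N | j : 'I_K].
have : (0 < #|~: tested|)%N.
  have := cardsC tested; rewrite card_ord.
  have : (#|tested| <= K)%N by rewrite (leq_trans (leq_imset_card _ _)) // card_ord.
  lia.
move/card_gt0P => [e]; rewrite finset.in_setC => untested.
exists e; apply/forallP => j; rewrite finset.in_set1.
by apply: contra untested => /eqP ->; apply/imsetP; exists j.
Qed.

Local Open Scope ereal_scope.

Lemma exists_Tdet_ge t : exists e, N%:R%:E <= Tdet singletons pol e t.
Proof. by have [e miss] := exists_missed t; exists e; exact: Tdet_det_ge. Qed.

Lemma WMP_det_ge : N%:R%:E <= WMP singletons pol.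
Proof.
have [e Te] := exists_Tdet_ge 0; apply: le_trans Te _.
by apply: ereal_sup_ubound; exists e, 0%N.
Qed.

Lemma MWP_det_ge :
  cvgn (Defs.cesaro (maxT singletons pol)) -> N%:R%:E <= MWP singletons pol.
Proof.
move=> cv; apply: lim_cesaro_ge cv _ => t.
by have [e Te] := exists_Tdet_ge t; apply: le_trans Te (le_bigmax _ _ e).
Qed.

Local Close Scope ereal_scope.

Definition hit_count (e : 'I_N) (L : nat) : nat := (\sum_(j < L) (sig j == e))%N.

Lemma sum_hit_count L : (\sum_(e < N) hit_count e L = L)%N.
Proof.
rewrite /hit_count exchange_big /= -[X in _ = X]card_ord -sum1_card.
apply: eq_bigr => j _; rewrite (bigD1 (sig j)) //= eqxx big1 // => e ne.
by rewrite eq_sym (negbTE ne).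
Qed.

Lemma hit_count_windows e G : (forall t, exists j : 'I_G, sig (t + j)%N = e) ->
  forall k, (k <= hit_count e (k * G))%N.
Proof.
move=> window; elim=> // k IH; rewrite /hit_count mulSnr big_split_ord /=.
have [j je] := window (k * G)%N.
by rewrite -addn1 leq_add // (bigD1 j) //= je eqxx.
Qed.

(* An element met in every window of length [G e] has density at least [1 / G e];
   count the hits in a common multiple of all window lengths. *)
Lemma sum_inv_window_le1 (G : 'I_N -> nat) :
  (forall e t, exists j : 'I_(G e), sig (t + j)%N = e) -> \sum_(e < N) (G e)%:R^-1 <= 1 :> R.
Proof.
move=> window; have G0 e : (0 < G e)%N.
  by have [j _] := window e 0%N; exact: leq_ltn_trans (ltn_ord j).
pose L := (\prod_(e < N) G e)%N.
have L0 : 0 < L%:R :> R by rewrite ltr0n prodn_gt0.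
have GL e : (L %/ G e * G e = L)%N by apply: divnK; rewrite /L (bigD1 e) //= dvdn_mulr.
have hits : (\sum_(e < N) (L %/ G e) <= L)%N.
  rewrite -[X in (_ <= X)%N](sum_hit_count L); apply: leq_sum => e _.
  by have := hit_count_windows (window e) (L %/ G e); rewrite GL.
rewrite -(ler_pM2l L0) mulr1 mulr_sumr.
apply: le_trans (_ : _ <= (\sum_(e < N) L %/ G e)%N%:R) _.
  rewrite natr_sum; apply: ler_sum => e _.
  by rewrite -{1}(GL e) natrM mulfK // pnatr_eq0 -lt0n.
by rewrite ler_nat.
Qed.

Local Open Scope ereal_scope.

Lemma Mt_det_fineK e :
  Mt singletons pol e < +oo -> (fine (Mt singletons pol e))%:E = Mt singletons pol e.
Proof. by move=> fin; rewrite fineK // ge0_fin_numE // Mt_ge0 //; exact: is_policy_det. Qed.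

(* A wait longer than [Mt e] is impossible, so [e] is met in every window of that length. *)
Lemma window_Mt e : Mt singletons pol e < +oo ->
  forall t, exists j : 'I_(Num.truncn (fine (Mt singletons pol e))), sig (t + j)%N = e.
Proof.
move=> fin t; set G := Num.truncn _.
case: (boolP [forall j : 'I_G, e \notin singletons (sig (t + j)%N)]) => [miss|].
  have Tle : Tdet singletons pol e t <= Mt singletons pol e.
    by apply: ereal_sup_ubound; exists t.
  have := le_trans (Tdet_det_ge R miss) Tle.
  by rewrite -Mt_det_fineK // lee_fin leNgt real_truncnS_gt ?num_real.
by move/forallPn => [j]; rewrite negbK finset.in_set1 => /eqP je; exists j.
Qed.

Lemma EMP_det_ge : valid singletons pol -> N%:R%:E <= EMP singletons pol.
Proof.
move=> [P [fin _]]; pose G e := Num.truncn (fine (Mt singletons pol e)).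
have G0 e : (0 < G e)%N.
  by have [j _] := window_Mt (fin e) 0; exact: leq_ltn_trans (ltn_ord j).
have sumG : (N%:R ^+ 2 <= \sum_(e < N) (G e)%:R :> R)%R.
  apply: sum_inv_le1_sum_ge => [e|]; first by rewrite ltr0n.
  by apply: sum_inv_window_le1 => e; exact: window_Mt.
rewrite /EMP; under eq_bigr do rewrite -Mt_det_fineK //.
rewrite sum_pw_EFin lee_fin ler_pdivlMl ?ltr0n // -expr2; apply: le_trans sumG _.
by apply: ler_sum => e _; rewrite /G truncn_le -lee_fin Mt_det_fineK // Mt_ge0.
Qed.

End Deterministic.

Section Optima.
Variables (R : realType) (K : nat).
Local Notation N := K.+1.
Local Notation s := (@singletons K).
Local Notation rr := (round_robin K).
Local Notation A := (N%:R : R).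
Local Notation B := (N.+1%:R / 2 : R).
Local Open Scope ereal_scope.

Lemma optM_MAX_singletons : optM_MAX R s = A%:E.
Proof.
rewrite /optM_MAX (@ereal_inf_attained _ _ _ _ (uniform_dist R K)) ?WEP_uniform //.
  exact: is_dist_uniform.
by move=> q /WEP_mless_ge.
Qed.

Lemma optM_SUM_singletons : optM_SUM R s = A%:E.
Proof.
rewrite /optM_SUM (@ereal_inf_attained _ _ _ _ (uniform_dist R K)) ?EEP_uniform //.
  exact: is_dist_uniform.
by move=> q /EEP_mless_ge.
Qed.

Lemma optD_WMP_singletons : optD_WMP R s = A%:E.
Proof.
rewrite /optD_WMP /optD (@ereal_inf_attained _ _ _ _ rr) ?WMP_rr //; first exact: valid_rr.
by move=> sig _; exact: WMP_det_ge.
Qed.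

Lemma optD_EMP_singletons : optD_EMP R s = A%:E.
Proof.
rewrite /optD_EMP /optD (@ereal_inf_attained _ _ _ _ rr) ?EMP_rr //; first exact: valid_rr.
by move=> sig /EMP_det_ge.
Qed.

Lemma optD_MWP_singletons : optD_MWP R s = A%:E.
Proof.
rewrite /optD_MWP (@ereal_inf_attained _ _ _ _ rr) ?MWP_rr //.
  by split; [exact: valid_rr|apply/cvg_ex; eexists; exact: cesaro_maxT_rr].
by move=> sig [_ /MWP_det_ge].
Qed.

Lemma optD_WEP_singletons : optD_WEP R s = B%:E.
Proof.
rewrite /optD_WEP /optD (@ereal_inf_attained _ _ _ _ rr) ?WEP_rr //; first exact: valid_rr.
by move=> sig /WEP_ge.
Qed.

Lemma optD_EEP_singletons : optD_EEP R s = B%:E.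
Proof.
rewrite /optD_EEP /optD (@ereal_inf_attained _ _ _ _ rr) ?EEP_rr //; first exact: valid_rr.
by move=> sig /EEP_ge.
Qed.

Lemma optD_MEP_singletons : optD_MEP R s = B%:E.
Proof.
rewrite /optD_MEP /optD (@ereal_inf_attained _ _ _ _ rr) ?MEP_rr //; first exact: valid_rr.
by move=> sig [P _]; exact: MEP_ge.
Qed.

Lemma opt_MAX_singletons : opt_MAX R s = B%:E.
Proof.
rewrite /opt_MAX (@ereal_inf_attained _ _ _ _ (det_pol R rr)) ?WEP_rr //; first exact: valid_rr.
by move=> pol /WEP_ge.
Qed.

Lemma opt_SUM_singletons : opt_SUM R s = B%:E.
Proof.
rewrite /opt_SUM (@ereal_inf_attained _ _ _ _ (det_pol R rr)) ?EEP_rr //; first exact: valid_rr.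
by move=> pol /EEP_ge.
Qed.

End Optima.

Lemma ratio_ge_two_sub (R : realFieldType) (eps : R) (K : nat) : 0 < eps ->
  2 / eps < K.+1%:R -> (2 - eps) * (K.+2%:R / 2) <= K.+1%:R.
Proof.
move=> eps0; rewrite ltr_pdivrMr // -!natr1 mulrA ler_pdivrMr // => HK.
have K0 : 0 <= K%:R :> R by [].
nra.
Qed.

Theorem lemma7 (R : realType) (eps : R) : 0 < eps ->
  exists (n m : nat) (s : 'I_m -> {set 'I_n}) (A B : R),
    (0 < n)%N /\
    (@optM_MAX R n m s) = A%:E /\ (@optM_SUM R n m s) = A%:E /\ (@optD_WMP R n m s) = A%:E /\
    (@optD_EMP R n m s) = A%:E /\ (@optD_MWP R n m s) = A%:E /\
    (@optD_WEP R n m s) = B%:E /\ (@optD_EEP R n m s) = B%:E /\ (@optD_MEP R n m s) = B%:E /\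
    (@opt_MAX R n m s) = B%:E /\ (@opt_SUM R n m s) = B%:E /\
    (2 - eps) * B <= A.
Proof.
move=> eps0; pose K := Num.truncn (2 / eps).
exists K.+1, K.+1, singletons, K.+1%:R, (K.+2%:R / 2).
rewrite optM_MAX_singletons optM_SUM_singletons optD_WMP_singletons optD_EMP_singletons
  optD_MWP_singletons optD_WEP_singletons optD_EEP_singletons optD_MEP_singletons
  opt_MAX_singletons opt_SUM_singletons.
do !split => //.
by apply: ratio_ge_two_sub; rewrite // real_truncnS_gt ?num_real.
Qed.
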